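(* Let $F$ be a Fourier matrix of size $N$ whose indexing group $I_F$ is cyclic. Then $h^{FF}_\rho=\rho$ for every automorphism $\rho$ of $I_F$, and the set of pairs $(P,R)$ of $N\times N$ permutation matrices satisfying $PFR^{-1}=F$ equals $\{(P_\rho,P_\rho^T):\ \rho\in\mathrm{Aut}(I_F)\}$.
   Context: For $n\ge1$, $F_n$ is the $n\times n$ matrix with rows and columns indexed by $\mathbb Z_n$ and entries $e^{2\pi i\,\tilde i\tilde j/n}$. A Fourier matrix is $F=F_{N_1}\otimes\cdots\otimes F_{N_r}$ of size $N=N_1\cdots N_r$, indexed by $I_F=\mathbb Z_{N_1}\times\cdots\times\mathbb Z_{N_r}$ with $F_{i,j}=\prod_x(F_{N_x})_{i_x,j_x}$; group indices correspond to ordinary indices via lexicographic order. For a bijection $\rho:I_F\to I_F$, $P_\rho$ is the permutation matrix with $(P_\rho)_{i,\rho(i)}=1$. For an automorphism $\rho$ of $I_F$, $h^{FF}_\rho:I_F\to I_F$ is the unique bijection with $F_{\rho(i),j}=F_{i,h^{FF}_\rho(j)}$ for all $i,j\in I_F$. *)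

From HB Require Import structures.
From mathcomp Require Import all_boot all_order all_algebra.
From mathcomp Require Import reals trigo complex.
Set Implicit Arguments. Unset Strict Implicit. Unset Printing Implicit Defensive.
Import Order.TTheory GRing.Theory Num.Theory.
Local Open Scope ring_scope.

Section Fourier.
Variable R : realType.
Local Notation C := (R[i])%C.

Definition wn (n : nat) : C :=
  (cos (2 * pi / n%:R) +i* sin (2 * pi / n%:R))%C.

(* Fourier matrix F_{N_1} (x) ... (x) F_{N_r};  Ns x = N_{x+1} *)
Variables (r : nat) (Ns : 'I_r -> nat).

Definition NF : nat := (\prod_(x < r) Ns x)%N.

(* lexicographic (mixed radix, first coordinate most significant):
   the place value of coordinate x *)
Definition stride (x : 'I_r) : nat := (\prod_(y < r | x < y) Ns y)%N.

(* the x-th coordinate in Z_{N_x} of the group index corresponding to the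
   ordinary index i *)
Definition digit (x : 'I_r) (i : 'I_NF) : nat := ((i %/ stride x) %% Ns x)%N.

Definition FourierMx : 'M[C]_NF :=
  \matrix_(i, j) \prod_(x < r) wn (Ns x) ^+ (digit x i * digit x j).

Definition IF_add (i j k : 'I_NF) : Prop :=
  forall x, digit x k = ((digit x i + digit x j) %% Ns x)%N.

Definition IF_cyclic : Prop :=
  exists g : 'I_NF, forall i : 'I_NF, exists m : nat,
    forall x, digit x i = ((m * digit x g) %% Ns x)%N.

Definition IF_aut (rho : 'I_NF -> 'I_NF) : Prop :=
  bijective rho /\
  forall i j k, IF_add i j k -> IF_add (rho i) (rho j) (rho k).

Definition is_hFF (rho h : 'I_NF -> 'I_NF) : Prop :=
  bijective h /\ forall i j, FourierMx (rho i) j = FourierMx i (h j).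

Definition Pmx (rho : 'I_NF -> 'I_NF) : 'M[C]_NF :=
  \matrix_(i, j) (rho i == j)%:R.

End Fourier.

Arguments wn : clear implicits.
Arguments NF : clear implicits.
Arguments stride : clear implicits.
Arguments digit : clear implicits.
Arguments FourierMx : clear implicits.
Arguments IF_add : clear implicits.
Arguments IF_cyclic : clear implicits.
Arguments IF_aut : clear implicits.
Arguments is_hFF : clear implicits.
Arguments Pmx : clear implicits.

From HB Require Import structures.
From mathcomp Require Import all_boot all_order all_algebra.
From mathcomp Require Import reals trigo complex.
From mathcomp Require Import fingroup perm zify.
Set Implicit Arguments. Unset Strict Implicit. Unset Printing Implicit Defensive.
Import Order.TTheory GRing.Theory Num.Theory.
Local Open Scope ring_scope.

(* Write every index as a multiple m * g of a generator g of the cyclic group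
   I_F.  An automorphism rho commutes with these multiples, so
   F (rho (m g)) (m' g) = F (rho g) g ^+ (m m') = F g (rho g) ^+ (m m')
   = F (m g) (rho (m' g)) by symmetry of F; as the columns of F are pairwise
   distinct, this forces h = rho.  Conversely, P_s F P_t^-1 = F means
   F (s i) j = F i (t^-1 j), so each column of F stays multiplicative along s;
   since the rows of F include the coordinate characters of I_F, s preserves
   the group law.  Then t^-1 is h for the automorphism s, i.e. t^-1 = s. *)

Section RootOfUnity.
Variable R : realType.

Lemma expr_cos_sin (t : R) (k : nat) :
  ((cos t +i* sin t) ^+ k = cos (k%:R * t) +i* sin (k%:R * t))%C.
Proof.
elim: k => [|k IH]; first by rewrite expr0 mul0r cos0 sin0.
rewrite exprSr IH mulrSr mulrDl mul1r cosD sinD.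
by rewrite [sin _ * cos t + _]addrC.
Qed.

Lemma cos_lt1 (t : R) : 0 < t < pi *+ 2 -> cos t < 1.
Proof.
move=> /andP[t_gt0 t_lt2pi].
have cos_lt1_half u : 0 < u <= pi -> cos u < 1.
  move=> /andP[u_gt0 u_lepi]; rewrite -cos0.
  by rewrite ltr_cos ?in_itv /= ?u_lepi ?lexx ?pi_ge0 ?(ltW u_gt0).
have [t_lepi|pi_lt_t] := lerP t pi; first by rewrite cos_lt1_half ?t_gt0.
have -> : cos t = cos (pi *+ 2 - t).
  by rewrite -[in RHS]cosN opprB -[in RHS](cosD2pi (t - pi *+ 2)) subrK.
by rewrite cos_lt1_half // subr_gt0 t_lt2pi /= lerBlDr -lerBlDl mulr2n addrK ltW.
Qed.

Lemma wn_prim_root n : (0 < n)%N -> n.-primitive_root (wn R n).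
Proof.
move=> n_gt0; apply/andP; split => //; apply/forallP => -[k /= k_lt_n].
have n_neq0 : n%:R != 0 :> R by rewrite pnatr_eq0 -lt0n.
rewrite unity_rootE /wn expr_cos_sin; case: (k.+1 =P n) => [->|k1_neq_n].
  by rewrite mulrCA mulfV // mulr1 mulr_natl cos2pi sin2pi eqxx.
rewrite eqbF_neg; apply/eqP => -[/eqP]; rewrite lt_eqF // cos_lt1 //.
have k1_lt_n : (k.+1 < n)%N by rewrite ltn_neqAle k_lt_n andbT; apply/eqP.
have pi_gt0 : 0 < pi :> R := pi_gt0 R.
rewrite mulrCA -mulrA mulr_gt0 ?mulr_gt0 ?invr_gt0 ?ltr0n //=.
rewrite -[pi *+ 2]mulr_natl mulrA gtr_pMr ?mulr_gt0 ?ltr0n //.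
by rewrite ltr_pdivrMr ?ltr0n // mul1r ltr_nat.
Qed.

End RootOfUnity.

Lemma perm_mx_conj (R : comUnitRingType) n (A : 'M[R]_n) (s t : 'S_n) :
  perm_mx s *m A *m invmx (perm_mx t) = row_perm s (col_perm t A).
Proof.
have -> : invmx (perm_mx t) = perm_mx t^-1 :> 'M[R]_n.
  by rewrite -[invmx _]mulmx1 -perm_mx1 -(mulgV t) perm_mxM mulKmx ?unitmx_perm.
by rewrite row_permE col_permE mulmxA.
Qed.

Section IndexGroup.
Variables (r : nat) (Ns : 'I_r -> nat).
Hypothesis Ns_gt0 : forall x, (0 < Ns x)%N.
Local Notation N := (NF r Ns).
Local Notation digit := (digit r Ns).

Lemma digit_lt x i : (digit x i < Ns x)%N.
Proof. exact: ltn_pmod. Qed.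

Definition suffix_prod (k : nat) : nat := (\prod_(y < r | (k <= y)%N) Ns y)%N.

Lemma suffix_prod0 : suffix_prod 0 = N. Proof. by []. Qed.

Lemma suffix_prod_r : suffix_prod r = 1%N.
Proof. by rewrite /suffix_prod big_pred0 // => y; rewrite leqNgt ltn_ord. Qed.

Lemma suffix_prodS (x : 'I_r) : suffix_prod x = (Ns x * suffix_prod x.+1)%N.
Proof.
rewrite /suffix_prod (bigD1 x) //=; congr (_ * _)%N; apply: eq_bigl => y.
by rewrite ltn_neqAle andbC eq_sym.
Qed.

Lemma digitE x i : digit x i = ((i %/ suffix_prod x.+1) %% Ns x)%N.
Proof. by []. Qed.

Lemma modn_suffix_prodS (x : 'I_r) (c : nat) :
  (c %% suffix_prod x = (c %/ suffix_prod x.+1) %% Ns x * suffix_prod x.+1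
                        + c %% suffix_prod x.+1)%N.
Proof.
rewrite suffix_prodS modn_divl {1}(divn_eq (c %% _) (suffix_prod x.+1)).
by rewrite modn_dvdm // dvdn_mull.
Qed.

Lemma digit_inj (a b : 'I_N) : (forall x, digit x a = digit x b) -> a = b.
Proof.
move=> eq_ab; suff /(_ 0%N (leq0n r)) : forall k, (k <= r)%N ->
    (a %% suffix_prod k = b %% suffix_prod k)%N.
  by rewrite suffix_prod0 !modn_small // => /val_inj.
move=> k; move eq_m : (r - k)%N => m; elim: m k eq_m => [|m IH] k eq_m k_le_r.
  have -> : k = r by lia.
  by rewrite suffix_prod_r !modn1.
have k_lt_r : (k < r)%N by lia.
rewrite -[k]/(nat_of_ord (Ordinal k_lt_r)) !modn_suffix_prodS -!digitE.
by rewrite eq_ab IH //=; lia.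
Qed.

Local Notation digit_vec := {dffun forall x : 'I_r, 'I_(Ns x)}.

Definition digits (i : 'I_N) : digit_vec :=
  [ffun x => Ordinal (digit_lt x i)].

Lemma digits_inj : injective digits.
Proof.
move=> a b eq_ab; apply: digit_inj => x.
by have := congr1 (fun d : digit_vec => val (d x)) eq_ab; rewrite !ffunE.
Qed.

Lemma card_digits : #|digit_vec| = N.
Proof.
rewrite card_dep_ffun foldrE big_map big_enum /=.
by apply: eq_bigr => x _; rewrite card_ord.
Qed.

Lemma exists_digits (d : 'I_r -> nat) :
  exists i : 'I_N, forall x, digit x i = (d x %% Ns x)%N.
Proof.
have [|undigits _ digitsKV] := inj_card_bij digits_inj.
  by rewrite card_digits card_ord.
pose dd := [ffun x => Ordinal (ltn_pmod (d x) (Ns_gt0 x))].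
exists (undigits dd) => x.
by have := congr1 (fun d : digit_vec => val (d x)) (digitsKV dd); rewrite !ffunE.
Qed.

Definition IF_scale (m : nat) (g i : 'I_N) : Prop :=
  forall x, digit x i = (m * digit x g %% Ns x)%N.

Lemma IF_add_idem i g : IF_add r Ns i i i -> IF_scale 0 g i.
Proof.
move=> idem_i x; rewrite mul0n mod0n; have := idem_i x.
have := digit_lt x i; move: (digit x i) => d d_lt /eqP.
rewrite -{1}(modn_small d_lt) -[X in (X %% _ == _)%N]addn0 eqn_modDl mod0n.
by rewrite modn_small // eq_sym; move/eqP.
Qed.

Lemma IF_scale0_idem g i : IF_scale 0 g i -> IF_add r Ns i i i.
Proof. by move=> zero_i x; rewrite !zero_i !mul0n !mod0n. Qed.

Lemma IF_scaleS m g i k : IF_scale m g i -> IF_add r Ns i g k -> IF_scale m.+1 g k.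
Proof. by move=> scale_i add_igk x; rewrite add_igk scale_i modnDml mulSn addnC. Qed.

Lemma IF_aut_scale rho m g i :
  IF_aut r Ns rho -> IF_scale m g i -> IF_scale m (rho g) (rho i).
Proof.
move=> [_ rho_add]; elim: m i => [|m IH] i scale_i.
  exact: IF_add_idem (rho_add _ _ _ (IF_scale0_idem scale_i)).
have [i' scale_i'] := exists_digits (fun x => m * digit x g)%N.
have add_i'gi : IF_add r Ns i' g i.
  by move=> x; rewrite scale_i scale_i' modnDml mulSn addnC.
exact: IF_scaleS (IH _ scale_i') (rho_add _ _ _ add_i'gi).
Qed.

End IndexGroup.

Section FourierMatrix.
Variables (r : nat) (Ns : 'I_r -> nat).
Hypothesis Ns_gt0 : forall x, (0 < Ns x)%N.
Variable R : realType.
Local Notation N := (NF r Ns).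
Local Notation digit := (digit r Ns).
Local Notation F := (FourierMx R r Ns).
Local Notation w x := (wn R (Ns x)).

Let w_prim x : (Ns x).-primitive_root (w x) := wn_prim_root R (Ns_gt0 x).

Lemma w_expr_mod x a : w x ^+ (a %% Ns x) = w x ^+ a.
Proof. exact: prim_expr_mod. Qed.

Lemma FourierMx_sym i j : F i j = F j i.
Proof. by rewrite !mxE; apply: eq_bigr => x _; rewrite mulnC. Qed.

Lemma FourierMx_add i j k l : IF_add r Ns i j k -> F k l = F i l * F j l.
Proof.
move=> add_ijk; rewrite !mxE -big_split /=; apply: eq_bigr => x _.
by rewrite -exprD -mulnDl add_ijk -w_expr_mod modnMml w_expr_mod.
Qed.

Lemma FourierMx_scale m m' g g' i j :
  IF_scale m g i -> IF_scale m' g' j -> F i j = F g g' ^+ (m * m').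
Proof.
move=> scale_i scale_j; rewrite !mxE -prodrXl; apply: eq_bigr => x _.
rewrite scale_i scale_j -w_expr_mod modnMml modnMmr w_expr_mod -exprM.
by congr (_ ^+ _); lia.
Qed.

Lemma FourierMx_digit_row x : exists e, forall j, F e j = w x ^+ digit x j.
Proof.
have [e digits_e] := exists_digits Ns_gt0 (fun y => nat_of_bool (x == y)).
exists e => j; rewrite mxE (bigD1 x) //= big1 ?mulr1 => [|y y_neq_x].
  by rewrite digits_e eqxx -w_expr_mod modnMml w_expr_mod mul1n.
by rewrite digits_e eq_sym (negbTE y_neq_x) mod0n mul0n expr0.
Qed.

Lemma w_expr_inj x a b : (a < Ns x)%N -> (b < Ns x)%N -> w x ^+ a = w x ^+ b -> a = b.
Proof.
by move=> a_lt b_lt /eqP; rewrite (eq_prim_root_expr (w_prim x)) !modn_small // => /eqP.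
Qed.

Lemma FourierMx_col_inj a b : (forall i, F i a = F i b) -> a = b.
Proof.
move=> eq_col; apply: digit_inj => x; have [e row_e] := FourierMx_digit_row x.
by apply: (w_expr_inj (digit_lt Ns_gt0 _ _) (digit_lt Ns_gt0 _ _)); rewrite -!row_e.
Qed.

Lemma IF_add_FourierMx a b c : (forall l, F c l = F a l * F b l) -> IF_add r Ns a b c.
Proof.
move=> char_c x; have [e row_e] := FourierMx_digit_row x.
apply: (w_expr_inj (digit_lt Ns_gt0 _ _) (ltn_pmod _ (Ns_gt0 x))).
by rewrite w_expr_mod exprD -!row_e ![F e _]FourierMx_sym char_c.
Qed.

Hypothesis IF_is_cyclic : IF_cyclic r Ns.

Lemma FourierMx_aut_sym rho i j : IF_aut r Ns rho -> F (rho i) j = F i (rho j).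
Proof.
move=> aut_rho; have [g gen_g] := IF_is_cyclic.
have [[mi scale_i] [mj scale_j]] := (gen_g i, gen_g j).
rewrite (FourierMx_scale (IF_aut_scale Ns_gt0 aut_rho scale_i) scale_j).
by rewrite (FourierMx_scale scale_i (IF_aut_scale Ns_gt0 aut_rho scale_j)) FourierMx_sym.
Qed.

Lemma is_hFF_aut rho h : IF_aut r Ns rho -> is_hFF R r Ns rho h <-> h =1 rho.
Proof.
move=> aut_rho; split => [[_ hF] j | eq_h].
  by apply: FourierMx_col_inj => i; rewrite -hF FourierMx_aut_sym.
have [bij_rho _] := aut_rho.
split; first exact: (eq_bij bij_rho (fun i => esym (eq_h i))).
by move=> i j; rewrite eq_h FourierMx_aut_sym.
Qed.

Lemma Pmx_perm (s : 'S_N) : Pmx R r Ns s = perm_mx s.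
Proof. by apply/matrixP => i j; rewrite !mxE. Qed.

Lemma IF_aut_perm rho (rho_inj : injective rho) :
  IF_aut r Ns rho -> IF_aut r Ns (perm rho_inj).
Proof.
move=> [_ rho_add]; split; first exact: (injF_bij (@perm_inj _ _)).
by move=> i j k /rho_add; rewrite !permE.
Qed.

Lemma FourierMx_perm_conjP (s t : 'S_N) :
  perm_mx s *m F *m invmx (perm_mx t) = F <-> IF_aut r Ns s /\ t = s^-1%g.
Proof.
rewrite perm_mx_conj; split => [/matrixP fix_st | [aut_s ->]]; last first.
  by apply/matrixP => i j; rewrite 2!mxE FourierMx_aut_sym // permKV.
have st i j : F (s i) j = F i (t^-1%g j).
  by have := fix_st i (t^-1%g j); rewrite 2!mxE permKV.
have aut_s : IF_aut r Ns s.
  split; first exact: (injF_bij (@perm_inj _ _)).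
  move=> i j k add_ijk; apply: IF_add_FourierMx => l.
  by rewrite !st (FourierMx_add _ add_ijk).
have hFF_t : is_hFF R r Ns s t^-1%g by split; first exact: (injF_bij (@perm_inj _ _)).
split=> //; rewrite -[t]invgK; congr (_^-1)%g; apply/permP.
exact/(is_hFF_aut _ aut_s).
Qed.

End FourierMatrix.

Theorem lemma4p9 (R : realType) (r : nat) (Ns : 'I_r -> nat)
  (HN : forall x, (0 < Ns x)%N)
  (Hcyc : IF_cyclic r Ns) :
  (forall rho : 'I_(NF r Ns) -> 'I_(NF r Ns), IF_aut r Ns rho ->
     forall h, is_hFF R r Ns rho h <-> h =1 rho) /\
  (forall P Q : 'M[R[i]%C]_(NF r Ns),
     (is_perm_mx P /\ is_perm_mx Q /\ P *m FourierMx R r Ns *m invmx Q = FourierMx R r Ns)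
     <-> exists rho, IF_aut r Ns rho /\ P = Pmx R r Ns rho /\ Q = (Pmx R r Ns rho)^T).
Proof.
split=> [rho aut_rho h|P Q]; first exact: is_hFF_aut.
split=> [[/is_perm_mxP[s ->] [/is_perm_mxP[t ->]]] | [rho [aut_rho [-> ->]]]].
  move/(FourierMx_perm_conjP HN R Hcyc) => [aut_s ->].
  by exists s; rewrite Pmx_perm tr_perm_mx.
have [/bij_inj rho_inj _] := aut_rho.
have -> : Pmx R r Ns rho = perm_mx (perm rho_inj).
  by rewrite -Pmx_perm; apply/matrixP => i j; rewrite !mxE permE.
rewrite tr_perm_mx !perm_mx_is_perm; do 2!split=> //.
exact/(FourierMx_perm_conjP HN R Hcyc)/(conj (IF_aut_perm rho_inj aut_rho)).
Qed.
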